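(* Let $n,m,N$ be positive integers, $\mathbf{x}=(x_1,\ldots,x_n)$, and let $p_1,\ldots,p_N,q_1,\ldots,q_N,g_1,\ldots,g_m\in\mathbb{R}[\mathbf{x}]$. Let $\mathbf{K}=\{\mathbf{x}\in\mathbb{R}^n\mid g_j(\mathbf{x})\ge 0,\ j=1,\ldots,m\}$ and assume that $\mathbf{K}$ is compact and $q_i>0$ on $\mathbf{K}$ for every $i\in[N]$. Let $\rho=\inf_{\mathbf{x}\in\mathbf{K}}\sum_{i=1}^N p_i(\mathbf{x})/q_i(\mathbf{x})$. Consider the problem \[ \sup_{c\in\mathbb{R},\,h_2,\ldots,h_N\in\mathbb{R}[\mathbf{x}]}\ c\quad\text{s.t.}\quad p_1(\mathbf{x})+\Big(\sum_{i=2}^N h_i(\mathbf{x})-c\Big)q_1(\mathbf{x})\ge 0\ \ \forall\mathbf{x}\in\mathbf{K},\qquad p_i(\mathbf{x})-h_i(\mathbf{x})q_i(\mathbf{x})\ge 0\ \ \forall\mathbf{x}\in\mathbf{K},\ i=2,\ldots,N. \] Then the optimal value of this problem equals $\rho$.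
   Context: $[N]=\{1,\ldots,N\}$. $\mathbb{R}[\mathbf{x}]$ is the ring of real polynomials in $\mathbf{x}$. *)

From HB Require Import structures.
From mathcomp Require Import all_boot all_order all_algebra.
From mathcomp Require Import all_classical all_reals all_analysis.
From mathcomp Require mpoly.
Set Implicit Arguments. Unset Strict Implicit. Unset Printing Implicit Defensive.
Import Order.TTheory GRing.Theory Num.Theory.
Import numFieldNormedType.Exports.
Local Open Scope classical_set_scope.
Local Open Scope ring_scope.

Definition rpoly (R : realType) (n : nat) := mpoly.mpoly n R.

Definition peval (R : realType) (n : nat) (p : rpoly R n) (x : 'rV[R]_n) : R :=
  mpoly.meval (fun i => x ord0 i) p.

Definition semialg (R : realType) (n m : nat) (g : 'I_m -> rpoly R n)
  : set 'rV[R]_n := [set x | forall j, 0 <= peval (g j) x].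

(* rho = inf_{x in K} sum_i p_i(x)/q_i(x), as an extended real (+oo if K empty) *)
Definition rho (R : realType) (n m N : nat) (p q : 'I_N -> rpoly R n)
  (g : 'I_m -> rpoly R n) : \bar R :=
  ereal_inf [set (\sum_(i < N) peval (p i) x / peval (q i) x)%:E
            | x in semialg g].

(* Feasibility of (c, h_2..h_N); index 0 : 'I_N plays the role of 1 in [N];
   the component h at index 0 is irrelevant. *)
Definition feasible (R : realType) (n m N : nat) (p q : 'I_N -> rpoly R n)
  (g : 'I_m -> rpoly R n) (c : R) (h : 'I_N -> rpoly R n) : Prop :=
  (forall i : 'I_N, nat_of_ord i = 0%N -> forall x, semialg g x ->
     0 <= peval (p i) x +
          ((\sum_(k < N | nat_of_ord k != 0%N) peval (h k) x) - c)
            * peval (q i) x) /\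
  (forall i : 'I_N, nat_of_ord i != 0%N -> forall x, semialg g x ->
     0 <= peval (p i) x - peval (h i) x * peval (q i) x).

Definition optval (R : realType) (n m N : nat) (p q : 'I_N -> rpoly R n)
  (g : 'I_m -> rpoly R n) : \bar R :=
  ereal_sup [set c%:E | c in [set c : R | exists h, feasible p q g c h]].

From HB Require Import structures.
From mathcomp Require Import all_boot all_order all_algebra.
From mathcomp Require Import all_classical all_reals all_analysis.
From mathcomp Require mpoly.
Import (canonicals, coercions) mpoly.
From mathcomp Require Import lra ring.
Set Implicit Arguments.
Unset Strict Implicit.
Unset Printing Implicit Defensive.
Import Order.TTheory GRing.Theory Num.Theory.
Import numFieldNormedType.Exports.
Local Open Scope classical_set_scope.
Local Open Scope ring_scope.

(* Weak duality: for feasible (c, h), h_i <= p_i/q_i on K when i >= 2 and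
   c - sum_i h_i <= p_1/q_1, hence c <= rho.  Conversely, every p/q with q > 0
   on the compact K is approximated from below within e by a polynomial: if
   d <= q <= M on K then p/q = (p/M) sum_j (1 - q/M)^j is a geometric series
   with ratio in [0, 1 - d/M], so a truncation shifted down by e/2 will do.
   Approximating each p_i/q_i (i >= 2) within e/N makes rho - e feasible. *)

Lemma peval_continuous (R : realType) n (p : rpoly R n) : continuous (peval p).
Proof.
rewrite /peval; under eq_fun do rewrite mpoly.mevalE.
apply: (continuous_big add_continuous) => m _ x.
apply: continuousM; first exact: cst_continuous.
apply: (continuous_big mul_continuous) => i _.
move=> y; apply: (@continuous_comp _ _ _ (fun v : 'rV[R]_n => v ord0 i)
  (fun r : R => r ^+ m i)); [exact: coord_continuous | exact: exprn_continuous].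
Qed.

Lemma peval_geometric_sum (R : realType) n (p q : rpoly R n) (M : R) k x :
  M != 0 -> peval q x != 0 ->
  peval (M^-1 *: (p * \sum_(j < k) (1 - M^-1 *: q) ^+ j)) x =
  peval p x / peval q x * (1 - (1 - peval q x / M) ^+ k).
Proof.
move=> M0 q0; rewrite /peval mpoly.mevalZ mpoly.mevalM rmorph_sum /=.
under eq_bigr do rewrite rmorphXn rmorphB rmorph1 /= mpoly.mevalZ [_^-1 * _]mulrC.
set r := 1 - _ / M; have := subrX1 r k; set s := \sum_(_ < k) _.
move=> E; rewrite -[1 - r ^+ k]opprB E /r; field; exact/andP.
Qed.

Section CompactBounds.
Variables (R : realType) (T : topologicalType) (K : set T) (f : T -> R).
Hypotheses (cK : compact K) (cf : {within K, continuous f}).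

Lemma compact_ubound : exists B, forall x, K x -> f x <= B.
Proof.
have [->|/set0P K0] := eqVneq K set0; first by exists 0.
have [c Kc Hc] := compact_EVT_max K0 cK cf.
by exists (f c) => x /mem_set; exact: Hc.
Qed.

Lemma compact_pos_lbound : (forall x, K x -> 0 < f x) ->
  exists2 d, 0 < d & forall x, K x -> d <= f x.
Proof.
move=> f_gt0; have [->|/set0P K0] := eqVneq K set0; first by exists 1.
have [c /set_mem Kc Hc] := compact_EVT_min K0 cK cf.
by exists (f c) => [|x /mem_set]; [exact: f_gt0 | exact: Hc].
Qed.

End CompactBounds.

Lemma geometric_remainder_small (R : realType) (T : Type) (K : set T)
    (P Q : T -> R) (B d M : R) :
  0 < d -> d <= M -> (forall x, K x -> `|P x| <= B) ->
  (forall x, K x -> d <= Q x <= M) ->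
  forall e, 0 < e -> exists k, forall x, K x ->
    `|P x / Q x * (1 - Q x / M) ^+ k| < e.
Proof.
move=> d_gt0 dM PB QdM e e_gt0.
have M_gt0 : 0 < M by exact: lt_le_trans dM.
set a := 1 - d / M.
have a_ge0 : 0 <= a by rewrite subr_ge0 ler_pdivrMr // mul1r.
have a_lt1 : `|a| < 1 by rewrite ger0_norm // ltrBlDr ltrDl divr_gt0.
have eta_gt0 : 0 < e * d / (`|B| + 1) by rewrite !mulr_gt0 ?invr_gt0 // ltr_wpDl.
have [k _ /(_ k (leqnn k))] := cvgr0_norm_lt _ (cvg_expr a_lt1) _ eta_gt0.
rewrite /= ger0_norm ?exprn_ge0 // => ak_lt.
exists k => x Kx; have /andP[dQ QM] := QdM x Kx.
have Q_gt0 : 0 < Q x by exact: lt_le_trans dQ.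
have r_ge0 : 0 <= 1 - Q x / M by rewrite subr_ge0 ler_pdivrMr // mul1r.
have r_le_a : 1 - Q x / M <= a by rewrite lerD2l lerN2 ler_pM2r ?invr_gt0.
rewrite normrM normf_div (gtr0_norm Q_gt0) ger0_norm ?exprn_ge0 //.
apply: (le_lt_trans (y := (`|B| + 1) / d * a ^+ k)).
  apply: ler_pM; [by rewrite divr_ge0 // ltW | exact: exprn_ge0 | |].
    apply: ler_pM; [by [] | by rewrite invr_ge0 ltW | | by rewrite lef_pV2].
    by apply: le_trans (PB x Kx) _; rewrite ler_wpDr // real_ler_norm ?num_real.
  by rewrite lerXn2r ?nnegrE.
by move: ak_lt; rewrite ltr_pdivlMr ?ltr_wpDl // mulrAC ltr_pdivrMr // mulrC.
Qed.

Lemma peval_ratio_lower_approx (R : realType) n (K : set 'rV[R]_n) (p q : rpoly R n) :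
  compact K -> (forall x, K x -> 0 < peval q x) ->
  forall e, 0 < e -> exists h : rpoly R n, forall x, K x ->
    peval h x <= peval p x / peval q x <= peval h x + e.
Proof.
move=> cK q_gt0 e e_gt0.
have cq : {within K, continuous (peval q)}.
  exact/continuous_subspaceT/peval_continuous.
have cp : {within K, continuous (fun x => `|peval p x|)}.
  apply: continuous_subspaceT => x.
  by apply: continuous_comp; [exact: peval_continuous | exact: norm_continuous].
have [d d_gt0 qd] := compact_pos_lbound cK cq q_gt0.
have [Mq qM] := compact_ubound cK cq.
have [B pB] := compact_ubound cK cp.
pose M := Num.max Mq d.
have dM : d <= M by rewrite le_max lexx orbT.
have qdM x : K x -> d <= peval q x <= M by move=> Kx; rewrite qd //= le_max qM.
have [k Hk] :=
  geometric_remainder_small d_gt0 dM pB qdM (divr_gt0 e_gt0 (ltr0Sn R 1)).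
pose s : rpoly R n := M^-1 *: (p * \sum_(j < k) (1 - M^-1 *: q) ^+ j).
exists (s - mpoly.mpolyC n (e / 2)) => x Kx.
have -> : peval (s - mpoly.mpolyC n (e / 2)) x = peval s x - e / 2.
  by rewrite /peval mpoly.mevalB mpoly.mevalC.
have q0 : peval q x != 0 by rewrite gt_eqF ?q_gt0.
have M0 : M != 0 by rewrite gt_eqF ?(lt_le_trans d_gt0).
rewrite peval_geometric_sum // mulrBr mulr1.
have /ltr_normlP[] := Hk x Kx; set t := _ * _ ^+ k => t_lo t_hi.
apply/andP; split; lra.
Qed.

Lemma ereal_sup_eq_inf (R : realType) (T : Type) (S : set R) (K : set T)
    (f : T -> R) :
  (forall c x, S c -> K x -> c <= f x) ->
  (forall c e, (forall x, K x -> c <= f x) -> 0 < e -> S (c - e)) ->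
  ereal_sup [set c%:E | c in S] = ereal_inf [set (f x)%:E | x in K].
Proof.
move=> S_le_f S_dense; apply/eqP; rewrite eq_le; apply/andP; split.
  apply: ge_ereal_sup => _ [c Sc <-]; apply: le_ereal_inf_tmp => _ [x Kx <-].
  by rewrite lee_fin; exact: S_le_f.
have lb_le_sup c : (forall x, K x -> c <= f x) ->
    (c%:E <= ereal_sup [set c%:E | c in S])%E.
  move=> c_lb; apply/lee_subgt0Pr => e e_gt0.
  by apply: ereal_sup_ubound; exists (c - e) => //; exact: S_dense.
have inf_le x : K x -> (ereal_inf [set (f x)%:E | x in K] <= (f x)%:E)%E.
  by move=> Kx; apply: ereal_inf_lbound; exists x.
case E: (ereal_inf _) inf_le => [r| |] inf_le.
- by apply: lb_le_sup => x /inf_le; rewrite lee_fin.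
- rewrite (@eq_infty _ (ereal_sup _)) // => c.
  by apply: lb_le_sup => x /inf_le.
- exact: leNye.
Qed.

Section RatioSumProgram.
Variables (R : realType) (n m N : nat).
Variables (p q : 'I_N -> rpoly R n) (g : 'I_m -> rpoly R n).
Hypothesis N_gt0 : (0 < N)%N.
Hypothesis K_compact : compact (semialg g).
Hypothesis q_gt0 : forall i x, semialg g x -> 0 < peval (q i) x.

Let i0 : 'I_N := Ordinal N_gt0.

Lemma ratio_sum_split x :
  \sum_(i < N) peval (p i) x / peval (q i) x =
  peval (p i0) x / peval (q i0) x +
  \sum_(i < N | nat_of_ord i != 0%N) peval (p i) x / peval (q i) x.
Proof.
by rewrite (bigD1 i0) //=; congr (_ + _); apply: eq_bigl => i; rewrite -val_eqE.
Qed.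

Lemma feasible_le_ratio_sum c h x : feasible p q g c h -> semialg g x ->
  c <= \sum_(i < N) peval (p i) x / peval (q i) x.
Proof.
move=> [h_i0 h_i] Kx; rewrite ratio_sum_split.
have h_le : \sum_(i < N | nat_of_ord i != 0%N) peval (h i) x <=
    \sum_(i < N | nat_of_ord i != 0%N) peval (p i) x / peval (q i) x.
  apply: ler_sum => i i_neq0.
  by rewrite ler_pdivlMr ?q_gt0 // -subr_ge0; exact: h_i.
have := h_i0 i0 erefl x Kx; have q0_gt0 := q_gt0 i0 Kx => h0_ge0.
have : c - \sum_(i < N | nat_of_ord i != 0%N) peval (h i) x <=
    peval (p i0) x / peval (q i0) x by rewrite ler_pdivlMr //; lra.
lra.
Qed.

Lemma feasible_of_lower_bound c e :
  (forall x, semialg g x -> c <= \sum_(i < N) peval (p i) x / peval (q i) x) ->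
  0 < e -> exists h, feasible p q g (c - e) h.
Proof.
move=> c_lb e_gt0; have eN_gt0 : 0 < e / N%:R by rewrite divr_gt0 ?ltr0n.
have [h h_approx] := choice (fun i =>
  peval_ratio_lower_approx (p i) K_compact (q_gt0 i) eN_gt0).
exists h; split => [i i_eq0 x Kx | i _ x Kx]; last first.
  have /andP[h_le _] := h_approx i x Kx.
  by rewrite subr_ge0 -ler_pdivlMr ?q_gt0.
have -> : i = i0 by exact/val_inj.
have eN_sum : \sum_(j < N | nat_of_ord j != 0%N) e / N%:R <= e.
  rewrite big_mkcond /=; apply: (@le_trans _ _ (\sum_(j < N) e / N%:R)).
    by apply: ler_sum => j _; case: ifP => // _; exact: ltW.
  by rewrite sumr_const card_ord -[_ *+ N]mulr_natr divfK // pnatr_eq0 -lt0n.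
have ratio_le : \sum_(j < N | nat_of_ord j != 0%N) peval (p j) x / peval (q j) x
    <= \sum_(j < N | nat_of_ord j != 0%N) peval (h j) x + e.
  apply: le_trans (lerD (lexx _) eN_sum); rewrite -big_split /=.
  by apply: ler_sum => j _; have /andP[_ ->] := h_approx j x Kx.
have := c_lb x Kx; rewrite ratio_sum_split => c_le; have q0_gt0 := q_gt0 i0 Kx.
have : c - e - \sum_(j < N | nat_of_ord j != 0%N) peval (h j) x <=
    peval (p i0) x / peval (q i0) x by lra.
by rewrite ler_pdivlMr // => ?; lra.
Qed.

End RatioSumProgram.

Theorem theorem3p1 (R : realType) (n m N : nat)
  (hn : (0 < n)%N) (hm : (0 < m)%N) (hN : (0 < N)%N)
  (p q : 'I_N -> rpoly R n) (g : 'I_m -> rpoly R n)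
  (hK : compact (semialg g))
  (hq : forall i : 'I_N, forall x, semialg g x -> 0 < peval (q i) x) :
  optval p q g = rho p q g.
Proof.
apply: ereal_sup_eq_inf => [c x [h feas] Kx | c e c_lb e_gt0].
  exact: feasible_le_ratio_sum feas Kx.
exact: feasible_of_lower_bound.
Qed.
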